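(* Let $G=(V,E)$ with $|V|=n$. Assume that there is $\alpha>0$ such that $d(v)\ge\alpha n$ for all $v\in V$ and $e(W,V\setminus W)\ge\alpha|W||V\setminus W|$ for all $W\subseteq V$. Then for all $u,w\in V$ there is $1\le d\le 8/\alpha^2+2$ such that there are at least $(\alpha^4/64)^{d+1}n^{d-1}$ paths of length $d$ from $u$ to $w$.
   Context: $d(v)$ is the degree of $v$; $e(U,W)$ is the number of edges with one endpoint in $U$ and the other in $W$; the length of a path is its number of edges. *)

From mathcomp Require Import all_boot all_order all_algebra.
Set Implicit Arguments. Unset Strict Implicit. Unset Printing Implicit Defensive.

Section Graph.
Variables (T : finType) (e : rel T).

Definition simple_graph : Prop := symmetric e /\ irreflexive e.

Definition deg (v : T) : nat := #|[set y | e v y]|.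

(* e(U,W): number of edges with one endpoint in U and the other in W
   (for disjoint U, W this is the number of ordered pairs (x,y), x in U, y in W, xy an edge) *)
Definition e_between (U W : {set T}) : nat :=
  #|[set p : T * T | [&& p.1 \in U, p.2 \in W & e p.1 p.2]]|.

(* walks of length d (d edges, d+1 vertices) from u to w, as vertex sequences
   f 0, f 1, ..., f d with consecutive vertices adjacent *)
Definition walks (d : nat) (u w : T) : {set {ffun 'I_d.+1 -> T}} :=
  [set f : {ffun 'I_d.+1 -> T} |
     [&& f ord0 == u, f ord_max == w &
         [forall i : 'I_d, e (f (widen_ord (leqnSn d) i)) (f (lift ord0 i))]]].

End Graph.

(* Fix u, put gamma = alpha^3/32 and call x j-rich when there are at least
   (gamma n)^j / n walks of length j from u to x; a vertex with gamma n j-rich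
   neighbours is then (j+1)-rich.  Let U_j be the set of j- or (j+1)-rich
   vertices; |U_0| >= alpha n by the degree condition.  While
   |U_j| <= (1 - alpha/2) n, the cut condition gives at least alpha^2 n^2 / 4
   edges leaving U_j, and a vertex outside U_(j+1) receives at most 2 gamma n of
   them, so at least (alpha^2/4 - 2 gamma) n vertices join U_(j+1).  At most
   alpha^2 n / 16 vertices leave: such a vertex is j-rich but not (j+2)-rich, so
   it has at least (alpha - gamma) n neighbours that are not (j+1)-rich, each of
   which has at most gamma n j-rich neighbours.  Hence |U_j| grows by
   alpha^2 n / 8 per step, some U_k with k <= 8/alpha^2 exceeds (1 - alpha/2) n,
   and w has alpha n / 4 neighbours that are all k-rich or all (k+1)-rich. *)

From mathcomp Require Import all_boot all_order all_algebra.
From mathcomp Require Import ring lra.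
Set Implicit Arguments. Unset Strict Implicit. Unset Printing Implicit Defensive.
Import Order.TTheory GRing.Theory Num.Theory.

Lemma lift_max_widen n (i : 'I_n) : lift ord_max i = widen_ord (leqnSn n) i.
Proof. by apply: val_inj; exact: lift_max i. Qed.

Section Walks.
Variables (T : finType) (e : rel T).

Lemma card_walks0_gt0 (u : T) : 0 < #|walks e 0 u u|.
Proof.
apply/card_gt0P; exists [ffun=> u]; rewrite inE !ffunE eqxx /=.
by apply/forallP => -[].
Qed.

Definition walk_rcons k (f : {ffun 'I_k.+1 -> T}) (y : T) : {ffun 'I_k.+2 -> T} :=
  [ffun i => if unlift ord_max i is Some j then f j else y].

Lemma walk_rcons_widen k (f : {ffun 'I_k.+1 -> T}) y j :
  walk_rcons f y (widen_ord (leqnSn k.+1) j) = f j.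
Proof. by rewrite -lift_max_widen ffunE liftK. Qed.

Lemma walk_rcons_max k (f : {ffun 'I_k.+1 -> T}) y : walk_rcons f y ord_max = y.
Proof. by rewrite ffunE unlift_none. Qed.

Lemma walk_rcons_in_walks k (u x y : T) (f : {ffun 'I_k.+1 -> T}) :
  f \in walks e k u x -> e x y -> walk_rcons f y \in walks e k.+1 u y.
Proof.
rewrite !inE => /and3P[f0 fmax /forallP fstep] exy.
rewrite walk_rcons_max eqxx /=; apply/andP; split.
  have -> : ord0 = widen_ord (leqnSn k.+1) ord0 by apply: val_inj.
  by rewrite walk_rcons_widen; exact: f0.
apply/forallP => i; rewrite walk_rcons_widen.
have [i' -> | ->] := unliftP ord_max i; last first.
  have -> : lift ord0 ord_max = ord_max :> 'I_k.+2 by apply: val_inj.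
  by rewrite walk_rcons_max (eqP fmax).
rewrite lift_max_widen.
have -> : lift ord0 (widen_ord (leqnSn k) i') = widen_ord (leqnSn k.+1) (lift ord0 i').
  by apply: val_inj.
by rewrite walk_rcons_widen; exact: fstep.
Qed.

Lemma sum_card_walks_le k (u y : T) :
  \sum_(x | e x y) #|walks e k u x| <= #|walks e k.+1 u y|.
Proof.
pose S := [set p : T * {ffun 'I_k.+1 -> T} | e p.1 y && (p.2 \in walks e k u p.1)].
have -> : \sum_(x | e x y) #|walks e k u x| = #|S|.
  rewrite (eq_bigr (fun x => \sum_(f in walks e k u x) 1)) => [|x _]; last by rewrite sum1_card.
  by rewrite pair_big_dep -sum1_card; apply: eq_bigl => p; rewrite [in RHS]inE.
rewrite -(card_in_imset (f := fun p => walk_rcons p.2 y)).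
  apply/subset_leq_card/subsetP => _ /imsetP[[x f] + ->].
  by rewrite inE => /andP[exy fw]; exact: walk_rcons_in_walks fw exy.
move=> [x1 f1] [x2 f2]; rewrite !inE /=.
move=> /andP[_ /and3P[_ /eqP<- _]] /andP[_ /and3P[_ /eqP<- _]] E.
suff -> : f1 = f2 by [].
by apply/ffunP => j; rewrite -(walk_rcons_widen f1 y) E walk_rcons_widen.
Qed.

Lemma card_walks1_gt0 (u y : T) : e u y -> 0 < #|walks e 1 u y|.
Proof.
move=> euy; apply: leq_trans (sum_card_walks_le 0 u y).
by rewrite (bigD1 u) //=; apply: leq_trans (card_walks0_gt0 u) (leq_addr _ _).
Qed.

End Walks.

Section Neighbours.
Variables (T : finType) (e : rel T).

Definition deg_in (A : {set T}) (y : T) : nat := #|[set x | e y x] :&: A|.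

Lemma deg_in_subset (A B : {set T}) y : A \subset B -> deg_in A y <= deg_in B y.
Proof. by move=> AB; apply/subset_leq_card/setIS. Qed.

Lemma deg_inU (A B : {set T}) y : deg_in (A :|: B) y <= deg_in A y + deg_in B y.
Proof. by rewrite /deg_in setIUr; apply: leq_card_setU. Qed.

Lemma deg_in_le_card (A : {set T}) y : deg_in A y <= #|A|.
Proof. by apply/subset_leq_card/subsetIr. Qed.

Lemma deg_in_setC (A : {set T}) y : deg_in A y + deg_in (~: A) y = deg e y.
Proof. by rewrite /deg_in /deg -setDE cardsID. Qed.

Lemma e_between_sum (A B : {set T}) : e_between e A B = \sum_(x in A) deg_in B x.
Proof.
transitivity (\sum_(x in A) \sum_(y in B | e x y) 1).
  rewrite /e_between pair_big_dep -sum1_card; apply: eq_bigl => -[x y].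
  by rewrite !inE andbA.
apply: eq_bigr => x _; rewrite /deg_in -sum1_card; apply: eq_bigl => y.
by rewrite !inE andbC.
Qed.

Lemma e_betweenC (A B : {set T}) : symmetric e -> e_between e A B = e_between e B A.
Proof.
move=> e_sym; rewrite /e_between -(card_imset _ (can_inj swap_pairK)).
rewrite (can2_imset_pre _ swap_pairK swap_pairK); apply: eq_card => -[x y].
by rewrite !inE /= e_sym; case: (x \in B); case: (y \in A).
Qed.

End Neighbours.

Local Open Scope ring_scope.

Lemma mul_ge_quarter (R : realFieldType) (a n x y : R) : 0 <= a -> 0 <= n ->
  x + y = n -> a * n <= x -> a * n / 2 <= y -> a * n ^+ 2 / 4 <= x * y.
Proof.
move=> a_ge0 n_ge0 xy_n x_ge y_ge; have an_ge0 : 0 <= a * n by exact: mulr_ge0.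
have [x_big | x_small] := lerP (n / 2) x.
  have : n / 2 * (a * n / 2) <= x * y by apply: ler_pM => //; lra.
  by rewrite expr2; lra.
have : a * n * (n / 2) <= x * y by apply: ler_pM => //; lra.
by rewrite expr2; nra.
Qed.

Section Thresholds.
Variables (R : realFieldType) (T : finType) (e : rel T) (u : T) (gamma : R).
Hypothesis e_sym : symmetric e.
Hypothesis gamma_ge0 : 0 <= gamma.
Local Notation N := (#|T|%:R : R).

Definition walk_threshold j : R := (gamma * N) ^+ j / N.

Definition rich j : {set T} := [set x | walk_threshold j <= #|walks e j u x|%:R].

Definition rich2 j : {set T} := rich j :|: rich j.+1.

Lemma walk_threshold_ge0 j : 0 <= walk_threshold j.
Proof. by rewrite /walk_threshold divr_ge0 ?exprn_ge0 ?mulr_ge0. Qed.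

Lemma deg_in_rich_walks i y :
  (deg_in e (rich i) y)%:R * walk_threshold i <= #|walks e i.+1 u y|%:R.
Proof.
pose S := [set x | e y x] :&: rich i.
have sum_le : (\sum_(x in S) #|walks e i u x| <= #|walks e i.+1 u y|)%N.
  apply: leq_trans (sum_card_walks_le e i u y).
  rewrite big_mkcond [X in (_ <= X)%N]big_mkcond; apply: leq_sum => x _.
  by rewrite !inE e_sym; case: (e x y) => //=; case: ifP.
apply: le_trans (_ : (\sum_(x in S) #|walks e i u x|)%:R <= _); last by rewrite ler_nat.
rewrite /deg_in -sum1_card !natr_sum mulr_suml; apply: ler_sum => x.
by rewrite inE => /andP[_]; rewrite inE mul1r.
Qed.

Lemma rich_succ j y : gamma * N <= (deg_in e (rich j) y)%:R -> y \in rich j.+1.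
Proof.
move=> hy; rewrite inE; apply: le_trans (deg_in_rich_walks j y).
by rewrite /walk_threshold exprS -mulrA ler_wpM2r // -/(walk_threshold j) walk_threshold_ge0.
Qed.

Lemma deg_in_rich_le j y : y \notin rich j.+1 -> (deg_in e (rich j) y)%:R <= gamma * N.
Proof. by move=> yN; rewrite leNgt; apply: contra yN => /ltW/rich_succ. Qed.

Lemma rich1_of_edge y : gamma <= 1 -> e u y -> y \in rich 1.
Proof.
move=> gamma_le1 euy; rewrite inE /walk_threshold expr1 mulfK; last first.
  by rewrite pnatr_eq0 -lt0n; apply/card_gt0P; exists u.
by apply: le_trans gamma_le1 _; rewrite ler1n card_walks1_gt0.
Qed.

Variable alpha : R.
Hypothesis deg_ge : forall v, alpha * N <= (deg e v)%:R.
Hypothesis cut_ge : forall W : {set T},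
  alpha * #|W|%:R * #|~: W|%:R <= (e_between e W (~: W))%:R.

Lemma card_rich_drop j :
  #|rich j :\: rich j.+2|%:R * ((alpha - gamma) * N) <= gamma * N * N.
Proof.
set L := rich j :\: rich j.+2; set C := ~: rich j.+1.
have lower : #|L|%:R * ((alpha - gamma) * N) <= (e_between e L C)%:R.
  rewrite e_between_sum -sum1_card !natr_sum mulr_suml; apply: ler_sum => x.
  rewrite inE => /andP[xN _]; rewrite mul1r.
  have := deg_in_setC e (rich j.+1) x => /(congr1 (fun n => n%:R : R)).
  by rewrite natrD; have := deg_in_rich_le xN; have := deg_ge x; lra.
apply: le_trans lower _; rewrite e_betweenC // e_between_sum natr_sum.
apply: le_trans (_ : \sum_(y in C) gamma * N <= _).
  apply: ler_sum => y; rewrite inE => yN; apply: le_trans (deg_in_rich_le yN).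
  by rewrite ler_nat deg_in_subset // subsetDl.
by rewrite sumr_const -[X in X <= _]mulr_natr ler_wpM2l ?mulr_ge0 // ler_nat max_card.
Qed.

Lemma card_rich2_new j :
  alpha * #|rich2 j|%:R * #|~: rich2 j|%:R <=
  #|rich2 j.+1 :\: rich2 j|%:R * N + 2 * gamma * N * #|~: rich2 j|%:R.
Proof.
set U := rich2 j; set C := ~: U; set B := rich j.+2.
apply: le_trans (cut_ge U) _.
rewrite e_betweenC // e_between_sum (big_setID B) /= natrD !natr_sum.
apply: lerD.
  apply: le_trans (_ : \sum_(y in C :&: B) N <= _).
    apply: ler_sum => y _; rewrite ler_nat.
    exact: leq_trans (deg_in_le_card _ _ _) (max_card _).
  rewrite sumr_const -[X in X <= _]mulr_natl ler_wpM2r // ler_nat subset_leq_card //.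
  apply/subsetP => y; rewrite in_setI in_setC in_setD => /andP[-> yB].
  by rewrite in_setU yB orbT.
apply: le_trans (_ : \sum_(y in C :\: B) 2 * gamma * N <= _).
  apply: ler_sum => y; rewrite in_setD in_setC in_setU negb_or => /andP[yB /andP[_ yA1]].
  apply: le_trans (_ : (deg_in e (rich j) y + deg_in e (rich j.+1) y)%:R <= _).
    by rewrite ler_nat deg_inU.
  by rewrite natrD; have := deg_in_rich_le yA1; have := deg_in_rich_le yB; lra.
rewrite sumr_const -[X in X <= _]mulr_natr ler_wpM2l ?mulr_ge0 // ler_nat.
by rewrite subset_leq_card // subsetDl.
Qed.

Lemma card_rich2_0 : gamma <= 1 -> alpha * N <= #|rich2 0|%:R.
Proof.
move=> gamma_le1; apply: le_trans (deg_ge u) _; rewrite ler_nat subset_leq_card //.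
apply/subsetP => y; rewrite inE => /(rich1_of_edge gamma_le1) y_rich.
by rewrite in_setU y_rich orbT.
Qed.

End Thresholds.

Section Expander.
Variables (R : realFieldType) (T : finType) (e : rel T) (u : T) (alpha : R).
Hypothesis e_sym : symmetric e.
Hypothesis alpha_gt0 : 0 < alpha.
Hypothesis deg_ge : forall v, alpha * #|T|%:R <= (deg e v)%:R.
Hypothesis cut_ge : forall W : {set T},
  alpha * #|W|%:R * #|~: W|%:R <= (e_between e W (~: W))%:R.
Local Notation N := (#|T|%:R : R).
Local Notation gamma := (alpha ^+ 3 / 32).
Local Notation rich := (rich e u gamma).
Local Notation rich2 := (rich2 e u gamma).

Lemma cardT_gt0 : 0 < N.
Proof. by rewrite ltr0n; apply/card_gt0P; exists u. Qed.

Lemma alpha_le1 : alpha <= 1.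
Proof.
have deg_le : (deg e u)%:R <= N by rewrite ler_nat max_card.
by have := le_trans (deg_ge u) deg_le; rewrite -[X in _ <= X]mul1r ler_pM2r // cardT_gt0.
Qed.

Lemma alpha_pow_le j k : (j <= k)%N -> alpha ^+ k <= alpha ^+ j.
Proof. exact: ler_wiXn2l (ltW alpha_gt0) alpha_le1 _ _. Qed.

Lemma gamma_ge0 : 0 <= gamma.
Proof. by rewrite divr_ge0 // exprn_ge0 // ltW. Qed.

Lemma card_rich_drop_le j : #|rich j :\: rich j.+2|%:R <= alpha ^+ 2 * N / 16.
Proof.
have := card_rich_drop u e_sym gamma_ge0 deg_ge j.
rewrite mulrA ler_pM2r ?cardT_gt0 //; set l := _%:R => drop.
have a3_le : l * alpha ^+ 3 <= l * alpha.
  by rewrite ler_wpM2l ?ler0n // -{2}[alpha]expr1 alpha_pow_le.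
have a3N_ge0 : 0 <= alpha ^+ 3 * N by rewrite mulr_ge0 ?exprn_ge0 // ltW.
rewrite -(ler_pM2l alpha_gt0).
have -> : alpha * (alpha ^+ 2 * N / 16) = alpha ^+ 3 * N / 16 by ring.
lra.
Qed.

Lemma card_rich2_new_ge j :
  alpha * N <= #|rich2 j|%:R -> #|rich2 j|%:R <= (1 - alpha / 2) * N ->
  alpha ^+ 2 * N / 4 - 2 * gamma * N <= #|rich2 j.+1 :\: rich2 j|%:R.
Proof.
move=> lo hi; have N_gt0 := cardT_gt0.
have := card_rich2_new u e_sym gamma_ge0 cut_ge j.
have : #|rich2 j|%:R + #|~: rich2 j|%:R = N by rewrite -natrD cardsC.
set c := #|~: _|%:R; set m := #|_ :\: _|%:R => card_C growth.
have c_ge : alpha * N / 2 <= c by lra.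
have c_le : c <= N by have := ler0n R #|rich2 j|; lra.
have prod := mul_ge_quarter (ltW alpha_gt0) (ltW N_gt0) card_C lo c_ge.
have h1 := ler_wpM2l (ltW alpha_gt0) prod.
have h2 : 2 * gamma * N * c <= 2 * gamma * N * N.
  by apply: ler_wpM2l c_le; have := gamma_ge0; have := ltW N_gt0; nra.
by rewrite -(ler_pM2r N_gt0); rewrite expr2 in h1; nra.
Qed.

Lemma card_rich2_step j :
  alpha * N <= #|rich2 j|%:R -> #|rich2 j|%:R <= (1 - alpha / 2) * N ->
  #|rich2 j|%:R + alpha ^+ 2 * N / 8 <= #|rich2 j.+1|%:R.
Proof.
move=> lo hi; have new := card_rich2_new_ge lo hi; have drop := card_rich_drop_le j.
have swap : (#|rich2 j.+1| + #|rich2 j :\: rich2 j.+1| =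
             #|rich2 j| + #|rich2 j.+1 :\: rich2 j|)%N.
  by rewrite -(cardsID (rich2 j) (rich2 j.+1)) -(cardsID (rich2 j.+1) (rich2 j)) setIC addnAC.
have lost : (#|rich2 j :\: rich2 j.+1| <= #|rich j :\: rich j.+2|)%N.
  apply/subset_leq_card/subsetP => x; rewrite /rich2 !in_setD !in_setU.
  by case: (x \in rich j); case: (x \in rich j.+1); case: (x \in rich j.+2).
have a3N : alpha ^+ 3 * N <= alpha ^+ 2 * N.
  by rewrite ler_wpM2r ?alpha_pow_le // ltW ?cardT_gt0.
move: swap lost => /(congr1 (fun n => n%:R : R)); rewrite !natrD -(ler_nat R).
lra.
Qed.

(* The nat bound matters: [R] need not be archimedean, so the real bound on [k]
   alone would not show that a large [rich2 k] exists. *)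
Lemma card_rich2_iter k :
  (forall j, (j < k)%N -> #|rich2 j|%:R < (1 - alpha / 2) * N) ->
  alpha * N + k%:R * (alpha ^+ 2 * N / 8) <= #|rich2 k|%:R /\ (k <= #|rich2 k|)%N.
Proof.
have N_gt0 := cardT_gt0; have incr_gt0 : 0 < alpha ^+ 2 * N / 8.
  by rewrite divr_gt0 // mulr_gt0 // exprn_gt0.
elim: k => [|k IH] small.
  split=> //; rewrite mul0r addr0; apply: card_rich2_0 => //.
  by have := alpha_pow_le (leq0n 3); rewrite expr0; lra.
have [lo k_le] := IH (fun j jk => small j (ltnW jk)).
have k_ge0 : 0 <= k%:R :> R by rewrite ler0n.
have lo' : alpha * N <= #|rich2 k|%:R.
  by apply: le_trans lo; rewrite lerDl mulr_ge0 // ltW.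
have step := card_rich2_step lo' (ltW (small k (ltnSn k))).
split; first by rewrite -natr1 mulrDl mul1r; lra.
by apply: leq_ltn_trans k_le _; rewrite -(ltr_nat R); lra.
Qed.

Lemma exists_rich2_large :
  exists2 k, k%:R <= 8 / alpha ^+ 2 & (1 - alpha / 2) * N <= #|rich2 k|%:R.
Proof.
pose large k := (1 - alpha / 2) * N <= #|rich2 k|%:R.
have [k0 large_k0] : exists k, large k.
  have : ~~ [forall j : 'I_#|T|.+1, ~~ large j].
    apply/negP => /forallP none.
    have small j : (j < #|T|.+1)%N -> #|rich2 j|%:R < (1 - alpha / 2) * N.
      by move=> jT; rewrite ltNge; exact: none (Ordinal jT).
    by have [_] := card_rich2_iter small; rewrite ltnNge max_card.
  by rewrite negb_forall => /existsP[j]; rewrite negbK; exists j.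
have [k large_k min_k] := ex_minnP (ex_intro large k0 large_k0).
exists k => //.
have small j : (j < k)%N -> #|rich2 j|%:R < (1 - alpha / 2) * N.
  by move=> jk; rewrite ltNge; apply/negP => /min_k; rewrite leqNgt jk.
have [lower _] := card_rich2_iter small.
have N_gt0 := cardT_gt0; have alpha2_gt0 : 0 < alpha ^+ 2 by rewrite exprn_gt0.
have card_le : #|rich2 k|%:R <= N by rewrite ler_nat max_card.
rewrite ler_pdivlMr // -(ler_pM2r N_gt0).
have : 0 <= alpha * N by rewrite mulr_ge0 // ltW.
lra.
Qed.

Lemma deg_in_ge_of_card (S : {set T}) w :
  (1 - alpha / 2) * N <= #|S|%:R -> alpha * N / 2 <= (deg_in e S w)%:R.
Proof.
move=> large; have := deg_in_le_card e (~: S) w; rewrite -(ler_nat R) => outside.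
have := deg_in_setC e S w => /(congr1 (fun n => n%:R : R)); rewrite natrD.
have := cardsC S => /(congr1 (fun n => n%:R : R)); rewrite natrD.
by have := deg_ge w; lra.
Qed.

Lemma card_walks_ge i w : alpha * N / 4 <= (deg_in e (rich i) w)%:R ->
  (alpha ^+ 4 / 64) ^+ i.+2 * N ^+ i <= #|walks e i.+1 u w|%:R.
Proof.
move=> many; have N_gt0 := cardT_gt0.
apply: le_trans _ (deg_in_rich_walks u gamma e_sym i w).
apply: le_trans _ (ler_wpM2r (walk_threshold_ge0 T gamma_ge0 i) many).
have -> : alpha * N / 4 * walk_threshold T gamma i = alpha / 4 * gamma ^+ i * N ^+ i.
  by rewrite /walk_threshold exprMn; field; rewrite lt0r_neq0.
set c := alpha ^+ 4 / 64.
have c_ge0 : 0 <= c by rewrite divr_ge0 // exprn_ge0 // ltW.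
have c_le : c <= gamma.
  by have := gamma_ge0; have := alpha_pow_le (leqnSn 3); rewrite /c; lra.
have c2_le : c ^+ 2 <= alpha / 4.
  rewrite /c expr_div_n -exprM; have := alpha_pow_le (isT : (1 <= 4 * 2)%N).
  by rewrite expr1; have := alpha_gt0; lra.
rewrite -addn2 exprD; apply: ler_wpM2r; first by rewrite exprn_ge0 // ltW.
rewrite mulrC; apply: ler_pM; rewrite ?exprn_ge0 //.
by apply: lerXn2r; rewrite ?nnegrE ?gamma_ge0.
Qed.

End Expander.

Theorem lemma2p11 (R : realFieldType) (T : finType) (e : rel T) (alpha : R) :
  simple_graph e ->
  0 < alpha ->
  (forall v : T, alpha * #|T|%:R <= (deg e v)%:R) ->
  (forall W : {set T},
      alpha * #|W|%:R * #|~: W|%:R <= (e_between e W (~: W))%:R) ->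
  forall u w : T, exists d : nat,
    [/\ (1 <= d)%N, d%:R <= 8 / alpha ^+ 2 + 2 &
        (alpha ^+ 4 / 64) ^+ d.+1 * #|T|%:R ^+ d.-1 <= #|walks e d u w|%:R].
Proof.
move=> [e_sym _] alpha_gt0 deg_ge cut_ge u w.
pose A := rich e u (alpha ^+ 3 / 32).
have [k k_le large] := exists_rich2_large u e_sym alpha_gt0 deg_ge cut_ge.
have := deg_in_ge_of_card deg_ge w large.
have := deg_inU e (A k) (A k.+1) w; rewrite -(ler_nat R) natrD => deg_split many.
have two_le : 2 <= 8 / alpha ^+ 2.
  rewrite ler_pdivlMr ?exprn_gt0 //.
  by have := exprn_ile1 2 (ltW alpha_gt0) (alpha_le1 u deg_ge); lra.
have [rich_k | poor_k] := lerP (alpha * #|T|%:R / 4) (deg_in e (A k) w)%:R.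
  exists k.+1; split => //; first by rewrite -natr1; lra.
  exact: card_walks_ge e_sym alpha_gt0 deg_ge _ _ rich_k.
exists k.+2; split => //; first by rewrite -!natr1; lra.
by apply: card_walks_ge e_sym alpha_gt0 deg_ge _ _ _; lra.
Qed.
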